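(* Let $n$ be even and $f:\mathbb{F}_{2^n}\to\mathbb{F}_{2^n}$ be a map with exactly $t$ bent component functions. Then $N(f)\geq t+2^n$ and \[|\mathrm{Im}(f)|\leq 2^n-\tfrac12\left(\sqrt{4t+1}-1\right).\]
   Context: $\mathrm{Tr}$ is the absolute trace and $W_f(b,a)=\sum_{x}(-1)^{\mathrm{Tr}(bf(x)+ax)}$. The component functions of $f$ are $x\mapsto\mathrm{Tr}(\lambda f(x))$, $\lambda\neq0$; such a component is bent if $|W_f(\lambda,a)|=2^{n/2}$ for all $a\in\mathbb{F}_{2^n}$. $N(f)$ is the number of pairs $(x,y)$ with $f(x)=f(y)$. *)

From HB Require Import structures.
From mathcomp Require Import all_boot all_order all_algebra all_field.
Set Implicit Arguments. Unset Strict Implicit. Unset Printing Implicit Defensive.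
Import Order.TTheory GRing.Theory Num.Theory.
Local Open Scope ring_scope.

Definition abs_trace (F : finFieldType) (n : nat) (x : F) : F :=
  \sum_(i < n) x ^+ (2 ^ i).

(* (-1)^{Tr(y)} as an integer (Tr(y) is 0 or 1 in F_2). *)
Definition trsign (F : finFieldType) (n : nat) (y : F) : int :=
  if abs_trace n y == 0 then 1 else -1.

Definition walsh (F : finFieldType) (n : nat) (f : F -> F) (b a : F) : int :=
  \sum_(x : F) trsign n (b * f x + a * x).

(* The component x |-> Tr(lambda f(x)) is bent: |W_f(lambda,a)| = 2^{n/2} for all a. *)
Definition bent_component (F : finFieldType) (n : nat) (f : F -> F) (lam : F) : bool :=
  [forall a : F, `|walsh n f lam a| == (2 ^ n./2)%:Z].

Definition num_bent (F : finFieldType) (n : nat) (f : F -> F) : nat :=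
  #|[set lam : F | (lam != 0) && bent_component n f lam]|.

Definition Ncoll (F : finFieldType) (f : F -> F) : nat :=
  #|[set p : F * F | f p.1 == f p.2]|.

Definition image_size (F : finFieldType) (f : F -> F) : nat :=
  #|f @: [set: F]|.

From HB Require Import structures.
From mathcomp Require Import all_boot all_order all_algebra all_field.
From mathcomp Require Import zify lra.
Import Order.TTheory GRing.Theory Num.Theory.
Set Implicit Arguments. Unset Strict Implicit. Unset Printing Implicit Defensive.
Local Open Scope ring_scope.

(* Since Tr is additive, (-1)^Tr is a character of (F,+); it is
   nontrivial because Tr is a nonzero polynomial of degree 2^(n-1) < |F|.  Hence
   sum_b (-1)^Tr(bc) = 2^n [c = 0], and expanding the squares gives the
   "Parseval" identity  sum_b W_f(b,0)^2 = 2^n N(f).  The term b = 0 contributes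
   2^(2n) and each bent component contributes 2^n, so N(f) >= 2^n + t.  Writing N(f) and |F| through the fibre sizes s_y of f and
   k = 2^n - |Im f| = sum_y (s_y - 1)^+, one gets N(f) <= k^2 + k + 2^n, hence
   t <= k^2 + k, i.e. k >= (sqrt(4t+1) - 1)/2.
   The file first counts fibres of an arbitrary map of finite types, then
   develops the trace character of GF(2^n), then the Walsh second moment, and
   finally combines the two bounds. *)

Lemma sum_sqr_le_sqr_sum (I : finType) (d : I -> nat) :
  (\sum_i d i ^ 2 <= (\sum_i d i) ^ 2)%N.
Proof.
rewrite -mulnn big_distrl leq_sum // => i _.
by rewrite -mulnn leq_mul2l (bigD1 i) //= leq_addr orbT.
Qed.

Section Fibres.
Variables (T U : finType) (g : T -> U).

Definition fibre_size (y : U) : nat := (\sum_(x : T) (g x == y : nat))%N.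

Lemma card_collisions :
  #|[set p : T * T | g p.1 == g p.2]| =
  (\sum_(x : T) \sum_(x' : T) (g x == g x' : nat))%N.
Proof.
rewrite -sum1_card [RHS]pair_big /= big_mkcond; apply: eq_bigr => -[x x'] _.
by rewrite inE /=; case: eqP.
Qed.

Lemma sum_fibre_size : (\sum_(y : U) fibre_size y)%N = #|T|.
Proof.
rewrite exchange_big -sum1_card; apply: eq_bigr => x _.
by rewrite (bigD1 (g x)) //= eqxx big1 // => y /negbTE; rewrite eq_sym => ->.
Qed.

Lemma card_collisions_fibres :
  #|[set p : T * T | g p.1 == g p.2]| = (\sum_(y : U) fibre_size y ^ 2)%N.
Proof.
transitivity (\sum_(y : U) \sum_(x : T) \sum_(x' : T) ((g x == y) * (g x' == y)))%N.
  rewrite card_collisions [RHS]exchange_big; apply: eq_bigr => x _.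
  rewrite [RHS]exchange_big; apply: eq_bigr => x' _.
  rewrite (bigD1 (g x)) //= eqxx mul1n big1 ?addn0 1?eq_sym // => y.
  by rewrite eq_sym => /negbTE ->.
apply: eq_bigr => y _; rewrite -mulnn big_distrl; apply: eq_bigr => x _.
by rewrite big_distrr.
Qed.

Lemma card_image_fibres :
  #|g @: [set: T]| = (\sum_(y : U) (0 < fibre_size y : nat))%N.
Proof.
rewrite -sum1_card big_mkcond; apply: eq_bigr => y _.
suff -> : (y \in g @: [set: T]) = (0 < fibre_size y)%N by [].
apply/imsetP/idP => [[x _ ->]|]; first by rewrite /fibre_size (bigD1 x) //= eqxx.
case: (pickP (fun x => g x == y)) => [x /eqP <-|no_preimage]; first by exists x.
by rewrite /fibre_size big1 // => x _; rewrite no_preimage.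
Qed.

(* With k = |T| - |Im g| the total excess of the fibres over 1, the number of
   collisions is at most k^2 + k + |T|. *)
Lemma collisions_upper_bound (k := (#|T| - #|g @: [set: T]|)%N) :
  (#|[set p : T * T | g p.1 == g p.2]| <= k ^ 2 + k + #|T|)%N.
Proof.
pose excess y := (fibre_size y).-1.
have card_T : #|T| = (\sum_y excess y + #|g @: [set: T]|)%N.
  rewrite card_image_fibres -big_split -sum_fibre_size; apply: eq_bigr => y _.
  by rewrite /excess; case: (fibre_size y) => //= m; rewrite addn1.
have collisions : #|[set p : T * T | g p.1 == g p.2]| =
    (\sum_y excess y ^ 2 + 2 * \sum_y excess y + #|g @: [set: T]|)%N.
  rewrite card_image_fibres card_collisions_fibres big_distrr -!big_split.
  by apply: eq_bigr => y _; rewrite /excess; case: (fibre_size y) => //= m; lia.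
have := sum_sqr_le_sqr_sum excess.
rewrite /k collisions card_T; lia.
Qed.

End Fibres.

Section AbsoluteTrace.
Variables (F : finFieldType) (n : nat).
Hypothesis cardF : #|F| = (2 ^ n)%N.

Lemma pchar2 : (2 \in [pchar F])%N.
Proof. exact: card_finPcharP cardF isT. Qed.

Lemma n_gt0 : (0 < n)%N.
Proof. by have := card_finNzRing_gt1 F; rewrite cardF; case: n. Qed.

Lemma frobeniusD (i : nat) (x y : F) :
  (x + y) ^+ (2 ^ i) = x ^+ (2 ^ i) + y ^+ (2 ^ i).
Proof.
elim: i => [|i IH]; first by rewrite expn0 !expr1.
by rewrite expnSr !exprM IH sqrrD (mulrn_pchar pchar2) addr0.
Qed.

Lemma abs_traceD (x y : F) :
  abs_trace n (x + y) = abs_trace n x + abs_trace n y.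
Proof. by rewrite /abs_trace -big_split; apply: eq_bigr => i _; apply: frobeniusD. Qed.

(* Tr(x)^2 = Tr(x), since squaring permutes the conjugates x^(2^i) cyclically. *)
Lemma abs_trace_sqr (x : F) : abs_trace n x ^+ 2 = abs_trace n x.
Proof.
rewrite -(pFrobenius_autE pchar2) /abs_trace rmorph_sum /=.
under eq_bigr do rewrite pFrobenius_autE -exprM -expnSr.
have := cardF; case: n => [|m cardFm]; first by rewrite !big_ord0.
rewrite big_ord_recr big_ord_recl /= -cardFm expf_card expn0 expr1 addrC.
by congr (_ + _); apply: eq_bigr.
Qed.

Lemma abs_trace01 (x : F) : abs_trace n x = 0 \/ abs_trace n x = 1.
Proof.
have : abs_trace n x * (abs_trace n x - 1) = 0.
  by rewrite mulrBr mulr1 -expr2 abs_trace_sqr subrr.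
by move/eqP; rewrite mulf_eq0 subr_eq0 => /orP[]/eqP; auto.
Qed.

(* The trace is not identically zero: sum_(i<n) X^(2^i) is a nonzero polynomial
   of degree 2^(n-1), which has fewer than 2^n = |F| roots. *)
Lemma abs_trace_nontrivial : exists y : F, abs_trace n y != 0.
Proof.
have [y ytr|all0] := pickP (fun y : F => abs_trace n y != 0); first by exists y.
exfalso; pose p : {poly F} := \sum_(i < n) 'X^(2 ^ i).
have p_root (y : F) : root p y.
  by rewrite /root /p horner_sum; under eq_bigr do rewrite hornerXn; exact/negbFE/all0.
have p_neq0 : p != 0.
  apply/eqP => /(congr1 (fun q : {poly F} => q`_1)).
  rewrite coef0 /p coef_sum (bigD1 (Ordinal n_gt0)) //= coefXn eqxx big1 ?addr0.
    exact/eqP/oner_neq0.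
  move=> i /eqP ne0; rewrite coefXn; case: eqP => // /eqP.
  by rewrite -(expn0 2) eqn_exp2l // => /eqP i0; case: ne0; apply: val_inj.
have size_p : (size p <= (2 ^ n.-1).+1)%N.
  apply: (leq_trans (size_sum _ _ _)); apply/bigmax_leqP => i _.
  by rewrite size_polyXn ltnS leq_pexp2l // -ltnS prednK ?n_gt0.
have := max_poly_roots p_neq0 (introT allP (fun y _ => p_root y)) (enum_uniq F).
rewrite -cardE cardF => /leq_trans/(_ size_p).
have : (0 < 2 ^ n.-1)%N by rewrite expn_gt0.
rewrite -{2}(prednK n_gt0) expnS; lia.
Qed.

Lemma trsignD (x y : F) : trsign n (x + y) = trsign n x * trsign n y.
Proof.
rewrite /trsign abs_traceD.
case: (abs_trace01 x) => ->; case: (abs_trace01 y) => ->;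
  by rewrite ?addr0 ?add0r ?eqxx ?oner_eq0 ?(addrr_pchar2 pchar2) ?eqxx /=
             ?mulr1 ?mul1r ?mulrNN.
Qed.

Lemma trsign0 : trsign n (0 : F) = 1.
Proof. by rewrite /trsign /abs_trace big1 ?eqxx // => i _; rewrite expr0n expn_eq0. Qed.

(* A nontrivial character sums to zero: translating by y with Tr(y) = 1
   multiplies the sum by -1 and leaves it unchanged. *)
Lemma sum_trsign : \sum_(x : F) trsign n x = 0.
Proof.
have [y /negbTE ytr] := abs_trace_nontrivial.
have shift : \sum_(x : F) trsign n x * trsign n y = \sum_(x : F) trsign n x.
  by under eq_bigr do rewrite -trsignD; rewrite [RHS](reindex_inj (addIr y)).
have sign_y : trsign n y = -1 by rewrite /trsign ytr.
move: shift; rewrite -mulr_suml sign_y mulrN1 => /eqP.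
by rewrite eq_sym -subr_eq0 opprK -mulr2n mulrn_eq0 => /eqP.
Qed.

Lemma sum_trsign_mul (c : F) :
  \sum_(b : F) trsign n (b * c) = if c == 0 then (2 ^ n)%:Z else 0.
Proof.
have [->|c_neq0] := eqVneq c 0.
  by under eq_bigr do rewrite mulr0 trsign0; rewrite sumr_const -cardF natz.
by rewrite -[RHS]sum_trsign [RHS](reindex_inj (mulIf c_neq0)).
Qed.

End AbsoluteTrace.

Section WalshSpectrum.
Variables (F : finFieldType) (n : nat) (f : F -> F).
Hypothesis cardF : #|F| = (2 ^ n)%N.

Lemma walsh_sqr_sum :
  \sum_(b : F) walsh n f b 0 ^+ 2 = (2 ^ n)%:Z * (Ncoll f)%:R.
Proof.
transitivity (\sum_(b : F) \sum_(x : F) \sum_(y : F) trsign n (b * (f x + f y))).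
  apply: eq_bigr => b _; rewrite /walsh expr2 big_distrl; apply: eq_bigr => x _.
  rewrite big_distrr; apply: eq_bigr => y _.
  by rewrite !mul0r !addr0 mulrDr trsignD.
rewrite /Ncoll card_collisions natr_sum mulr_sumr exchange_big; apply: eq_bigr => x _.
rewrite natr_sum mulr_sumr exchange_big; apply: eq_bigr => y _.
rewrite (sum_trsign_mul cardF) addr_eq0 (oppr_pchar2 (pchar2 cardF)).
by case: eqP; rewrite ?mulr1 ?mulr0.
Qed.

Lemma walsh_zero : walsh n f 0 0 = (2 ^ n)%:Z.
Proof.
rewrite /walsh; under eq_bigr do rewrite !mul0r addr0 trsign0.
by rewrite sumr_const -cardF natz.
Qed.

Lemma bent_walsh_sqr (b : F) :
  ~~ odd n -> bent_component n f b -> walsh n f b 0 ^+ 2 = (2 ^ n)%:Z.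
Proof.
move=> n_even /forallP /(_ 0) /eqP walsh_b.
rewrite -(real_normK (num_real _)) walsh_b -natz -natrX -expnM muln2.
by rewrite (even_halfK n_even) natz.
Qed.

Lemma Ncoll_lower_bound : ~~ odd n -> (num_bent n f + 2 ^ n <= Ncoll f)%N.
Proof.
move=> n_even; set B := [set lam : F | (lam != 0) && bent_component n f lam].
have zero_notin_B : (0 : F) \notin B by rewrite inE eqxx.
have sum_B : \sum_(b in B) walsh n f b 0 ^+ 2 = (num_bent n f * 2 ^ n)%N%:Z.
  rewrite (eq_bigr (fun=> (2 ^ n)%:Z)) => [|b]; last first.
    by rewrite inE => /andP[_]; apply: bent_walsh_sqr.
  by rewrite sumr_const -mulr_natl natz PoszM.
have sum_notB : (2 ^ n * 2 ^ n)%N%:Z <= \sum_(b | b \notin B) walsh n f b 0 ^+ 2.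
  rewrite (bigD1 0) //= walsh_zero expr2 -PoszM lerDl.
  by apply: sumr_ge0 => b _; apply: sqr_ge0.
have := walsh_sqr_sum; rewrite (bigID (mem B)) /= sum_B => parseval.
have : (2 ^ n * (num_bent n f + 2 ^ n))%N%:Z <= (2 ^ n)%:Z * (Ncoll f)%:R.
  by rewrite -parseval mulnDr mulnC PoszD lerD2l.
by rewrite natz -PoszM lez_nat leq_pmul2l ?expn_gt0.
Qed.

End WalshSpectrum.

Lemma half_root_le (R : rcfType) (t k : nat) :
  (t <= k ^ 2 + k)%N -> (Num.sqrt (4 * t%:R + 1) - 1) / 2 <= k%:R :> R.
Proof.
move=> t_le; have k_ge0 := ler0n R k.
have : (4 * t + 1)%:R <= ((2 * k + 1) ^ 2)%:R :> R by rewrite ler_nat; nia.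
rewrite natrD natrM natrX natrD natrM -(ler_sqrt _ (sqr_ge0 _)) sqrtr_sqr ger0_norm.
  by lra.
by lra.
Qed.

Theorem theorem7p4 (R : rcfType) (F : finFieldType) (n t : nat) (f : F -> F) :
  ~~ odd n -> #|F| = (2 ^ n)%N -> num_bent n f = t ->
  (t + 2 ^ n <= Ncoll f)%N /\
  ((image_size f)%:R : R) <= (2 ^ n)%:R - (Num.sqrt (4 * t%:R + 1) - 1) / 2.
Proof.
move=> n_even cardF <-.
have lower := Ncoll_lower_bound f cardF n_even.
split=> //.
have upper := collisions_upper_bound f.
rewrite -/(Ncoll f) -/(image_size f) cardF /= in upper.
have image_le := leq_imset_card f [set: F].
rewrite -/(image_size f) cardsT cardF in image_le.
set k := (2 ^ n - image_size f)%N.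
have image_k : (2 ^ n)%:R = (image_size f)%:R + k%:R :> R by rewrite -natrD subnKC.
have t_le : (num_bent n f <= k ^ 2 + k)%N by rewrite /k; lia.
by have := half_root_le R t_le; rewrite image_k; lra.
Qed.
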